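(* The function $\beta\mapsto\lambda_1(\beta)$ is non-increasing on $(0,\tfrac12)$, and for every $\beta\in(0,\tfrac12)$, $$\frac{(1-2\beta)^2}{\beta^2+(1-\beta)^2}\le\lambda_1(\beta)\le\frac{1-2\beta}{1-\beta}.$$
   Context: Tree: for an integer $m\ge2$, the regular $m$-branching tree $\mathbb{T}_m$ has as vertices the root $\emptyset$ and all finite sequences $(\emptyset,a_1,\dots,a_k)$, $k\in\mathbb{N}$, $a_i\in\{0,\dots,m-1\}$. The level of $x=(\emptyset,a_1,\dots,a_k)$ is $|x|=k$ ($|\emptyset|=0$). The successors of $x$ are $(x,i)$; for $x\ne\emptyset$, $\hat x$ denotes its immediate predecessor. Operator: for $\beta\in[0,1)$ let $p_\beta=1$ if $\beta=0$ and $p_\beta=\beta/(1-\beta)$ if $\beta\in(0,1)$. For $u:\mathbb{T}_m\to\mathbb{R}$, $\Delta_\beta u(\emptyset)=\frac1m\sum_{i=0}^{m-1}u(\emptyset,i)-u(\emptyset)$ and, for $x\ne\emptyset$, $\Delta_\beta u(x)=\big(\beta u(\hat x)+\frac{1-\beta}{m}\sum_{i=0}^{m-1}u(x,i)-u(x)\big)p_\beta^{-|x|}$. $\mathcal{A}_\beta=\{\lambda>0:\exists v:\mathbb{T}_m\to\mathbb{R}\text{ and constants }0<c<C\text{ with } c<v<C \text{ on }\mathbb{T}_m \text{ and } \Delta_\beta v+\lambda v\le0 \text{ on }\mathbb{T}_m\}$, and $\lambda_1(\beta)=\sup\mathcal{A}_\beta$. *)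

From mathcomp Require Import all_boot all_order all_algebra.
From mathcomp Require Import all_classical all_reals all_analysis.
Set Implicit Arguments. Unset Strict Implicit. Unset Printing Implicit Defensive.
Import Order.TTheory GRing.Theory Num.Theory.
Local Open Scope ring_scope.
Local Open Scope classical_set_scope.

(* Vertices of the regular m-branching tree T_m: the root (empty sequence)
   and all finite sequences (a_1,...,a_k) with a_i in {0,...,m-1}. *)
Definition vertex (m : nat) := seq 'I_m.
Definition level (m : nat) (x : vertex m) : nat := size x.
Definition succ (m : nat) (x : vertex m) (i : 'I_m) : vertex m := rcons x i.
Definition pred_v (m : nat) (x : vertex m) : vertex m := take (size x).-1 x.

Section Op.
Variable R : realType.

Definition p_beta (beta : R) : R := if beta == 0 then 1 else beta / (1 - beta).

Definition Delta (m : nat) (beta : R) (u : vertex m -> R) (x : vertex m) : R :=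
  if x is [::] then
    (m%:R)^-1 * (\sum_(i < m) u (succ x i)) - u x
  else
    (beta * u (pred_v x) + (1 - beta) / m%:R * (\sum_(i < m) u (succ x i)) - u x)
      * (p_beta beta ^+ level x)^-1.

Definition A_beta (m : nat) (beta : R) : set R :=
  [set lam : R | 0 < lam /\
     exists (v : vertex m -> R) (c C : R),
       [/\ 0 < c, c < C,
           (forall x, c < v x /\ v x < C) &
           (forall x, Delta beta v x + lam * v x <= 0)]].

(* lambda_1(beta) = sup A_beta, taken in the extended reals (sup of the empty
   set is -oo, of an unbounded set +oo). *)
Definition lambda1 (m : nat) (beta : R) : \bar R :=
  ereal_sup [set (lam%:E) | lam in A_beta m beta].

End Op.

From mathcomp Require Import all_boot all_order all_algebra.
From mathcomp Require Import all_classical all_reals all_analysis.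
From mathcomp Require Import ring lra.
(* Write p = beta / (1 - beta). The level-wise infima F_k of a bounded positive
   supersolution satisfy the one-dimensional inequalities
     F_1 <= (1 - l) F_0,  b F_k + (1 - b) F_(k+2) <= (1 - l p^(k+1)) F_(k+1),
   and conversely a bounded positive sequence satisfying them is a supersolution
   when read as a function of the level. Induction on the second inequality gives
   F_k - F_(k+1) >= l F_0 p^k; summing over k yields l <= 1 - p, the upper bound.
   It also shows that F decreases, so the inequalities persist when beta is
   lowered, which is the monotonicity. For the lower bound the sequence
   (1 - a) + p^k (a + g k) is an explicit solution, with F_(k+1) <= 1 - l
   providing the slack; positivity (a < 1) reduces to a quadratic inequality in l
   which the claimed lower bound satisfies with room b l^2 to spare. *)

Set Implicit Arguments. Unset Strict Implicit. Unset Printing Implicit Defensive.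
Import Order.TTheory GRing.Theory Num.Theory.
Local Open Scope ring_scope.
Local Open Scope classical_set_scope.

Section RadialInequality.
Variable R : realType.
Implicit Types (b l p : R) (F : nat -> R).

Lemma p_betaE b : 0 < b -> p_beta b = b / (1 - b).
Proof. by move=> b_gt0; rewrite /p_beta gt_eqF. Qed.

Lemma p_beta_gt0 b : 0 < b -> b < 1 -> 0 < p_beta b.
Proof. by move=> b_gt0 b_lt1; rewrite p_betaE // divr_gt0 // subr_gt0. Qed.

Lemma p_betaK b : 0 < b -> b < 1 -> (1 - b) * p_beta b = b.
Proof. by move=> b_gt0 b_lt1; rewrite p_betaE // mulrC divfK // subr_eq0 gt_eqF. Qed.

Lemma one_sub_p_beta b : 0 < b -> b < 1 -> 1 - p_beta b = (1 - 2 * b) / (1 - b).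
Proof. by move=> b_gt0 b_lt1; rewrite p_betaE //; field; rewrite subr_eq0 gt_eqF. Qed.

Lemma p_beta_le b1 b2 : 0 < b1 -> b1 <= b2 -> b2 < 1 -> p_beta b1 <= p_beta b2.
Proof.
move=> b1_gt0 b12 b2_lt1; have b1_lt1 : b1 < 1 by lra.
rewrite !p_betaE ?(lt_le_trans b1_gt0 b12) //.
by rewrite ler_pdivrMr ?subr_gt0 // mulrAC ler_pdivlMr ?subr_gt0 //; nra.
Qed.

(* [Delta_beta u + l u <= 0] for [u x = F (level x)], multiplied by
   [p_beta b ^ level x]. *)
Definition radial_super b l F :=
  F 1%N - F 0%N + l * F 0%N <= 0 /\
  forall k, b * F k + (1 - b) * F k.+2 - F k.+1 + l * p_beta b ^+ k.+1 * F k.+1 <= 0.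

Lemma radial_super_decrement b l F : 0 < b -> b < 1 -> 0 <= l ->
  (forall k, 0 <= F k) -> radial_super b l F ->
  forall k, l * F 0%N * p_beta b ^+ k <= F k - F k.+1.
Proof.
move=> b_gt0 b_lt1 l_ge0 F_ge0 [F_root F_step].
have pb_ge0 := ltW (p_beta_gt0 b_gt0 b_lt1).
elim=> [|k IHk]; first by rewrite expr0 mulr1; lra.
have step : b * (F k - F k.+1) <= (1 - b) * (F k.+1 - F k.+2).
  have := F_step k; have : 0 <= l * p_beta b ^+ k.+1 * F k.+1.
    by rewrite mulr_ge0 ?mulr_ge0 ?exprn_ge0.
  lra.
have step_p : p_beta b * (F k - F k.+1) <= F k.+1 - F k.+2.
  by rewrite p_betaE // mulrAC ler_pdivrMr ?subr_gt0 // [_ * (1 - b)]mulrC.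
by rewrite exprSr mulrA mulrC (le_trans _ step_p) // ler_wpM2l.
Qed.

Lemma radial_super_nonincreasing b l F : 0 < b -> b < 1 -> 0 <= l ->
  (forall k, 0 <= F k) -> radial_super b l F -> forall k, F k.+1 <= F k.
Proof.
move=> b_gt0 b_lt1 l_ge0 F_ge0 F_super k.
have := radial_super_decrement b_gt0 b_lt1 l_ge0 F_ge0 F_super k.
have : 0 <= l * F 0%N * p_beta b ^+ k.
  by rewrite !mulr_ge0 ?exprn_ge0 ?(ltW (p_beta_gt0 b_gt0 b_lt1)).
lra.
Qed.

Lemma radial_super_mono b1 b2 l F : 0 < b1 -> b1 <= b2 -> b2 < 1 -> 0 <= l ->
  (forall k, 0 <= F k) -> radial_super b2 l F -> radial_super b1 l F.
Proof.
move=> b1_gt0 b12 b2_lt1 l_ge0 F_ge0 F_super; have b2_gt0 := lt_le_trans b1_gt0 b12.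
have F_noninc := radial_super_nonincreasing b2_gt0 b2_lt1 l_ge0 F_ge0 F_super.
split=> [|k]; first exact: F_super.1.
have := F_super.2 k.
have : 0 <= (b2 - b1) * (F k - F k.+2).
  by rewrite mulr_ge0 // subr_ge0 ?(le_trans (F_noninc _) (F_noninc _)).
have : l * p_beta b1 ^+ k.+1 * F k.+1 <= l * p_beta b2 ^+ k.+1 * F k.+1.
  rewrite ler_wpM2r // ler_wpM2l // lerXn2r ?nnegrE ?p_beta_le //.
  - exact: ltW (p_beta_gt0 b1_gt0 (le_lt_trans b12 b2_lt1)).
  - exact: ltW (p_beta_gt0 b2_gt0 b2_lt1).
lra.
Qed.

Lemma decrement_bound p l F : 0 <= p -> p < 1 -> 0 < F 0%N -> (forall k, 0 <= F k) ->
  (forall k, l * F 0%N * p ^+ k <= F k - F k.+1) -> l <= 1 - p.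
Proof.
move=> p_ge0 p_lt1 F0_gt0 F_ge0 F_dec; have p'_ge0 : 0 <= 1 - p by lra.
have partial k : l * F 0%N * (1 - p ^+ k) <= (1 - p) * (F 0%N - F k).
  elim: k => [|k IHk]; first by rewrite expr0 !subrr !mulr0.
  have := ler_wpM2l p'_ge0 (F_dec k).
  have -> : l * F 0%N * (1 - p ^+ k.+1)
      = l * F 0%N * (1 - p ^+ k) + (1 - p) * (l * F 0%N * p ^+ k) by rewrite exprSr; ring.
  lra.
have bound k : l - (1 - p) <= l * p ^+ k.
  have := partial k; have := F_ge0 k.
  nra.
rewrite -subr_le0; apply: (cvgr_to_ge (@cvg_geometric _ l p _)).
  by rewrite ger0_norm.
by apply: nearW => k; exact: bound.
Qed.

Definition profile (c0 a g p : R) (k : nat) : R := c0 + p ^+ k * (a + g * k%:R).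

Lemma profile_decrement c0 a g p k :
  profile c0 a g p k - profile c0 a g p k.+1 = p ^+ k * ((1 - p) * (a + g * k%:R) - p * g).
Proof. by rewrite /profile -natr1 exprS; ring. Qed.

Lemma profile_second_difference c0 a g p b k : b = (1 - b) * p ->
  b * profile c0 a g p k + (1 - b) * profile c0 a g p k.+2 - profile c0 a g p k.+1
  = - ((1 - b) * (1 - p) * g * p ^+ k.+1).
Proof.
move=> bE; apply/eqP; rewrite -subr_eq0 opprK.
have -> : b * profile c0 a g p k + (1 - b) * profile c0 a g p k.+2
    - profile c0 a g p k.+1 + (1 - b) * (1 - p) * g * p ^+ k.+1
  = (b - (1 - b) * p) * p ^+ k * ((1 - p) * (a + g * k%:R) - p * g).
  by rewrite /profile -!natr1 !exprS; ring.
by rewrite -bE subrr !mul0r.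
Qed.

Lemma radial_super_profile b l a g : 0 < b -> b < 1 -> 0 < l -> 0 <= g -> 0 < a < 1 ->
  (1 - p_beta b) * a = l + p_beta b * g -> (1 - b) * (1 - p_beta b) * g = l * (1 - l) ->
  (forall k, 1 - a < profile (1 - a) a g (p_beta b) k <= 1) /\
  radial_super b l (profile (1 - a) a g (p_beta b)).
Proof.
move=> b_gt0 b_lt1 l_gt0 g_ge0 /andP[a_gt0 a_lt1] aE gE.
have bE := p_betaK b_gt0 b_lt1; move: aE gE bE; set p := p_beta b => aE gE bE.
have p_gt0 : 0 < p := p_beta_gt0 b_gt0 b_lt1.
have pg_ge0 : 0 <= p * g by apply: mulr_ge0 (ltW p_gt0) g_ge0.
have p'_gt0 : 0 < 1 - p by rewrite -(pmulr_lgt0 _ a_gt0) aE; lra.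
set F := profile (1 - a) a g p.
have F_dec k : F k - F k.+1 = p ^+ k * (l + (1 - p) * g * k%:R).
  by rewrite profile_decrement; congr (_ * _); lra.
have /nonincreasing_seqP F_noninc : forall k, F k.+1 <= F k.
  move=> k; have := F_dec k; suff : 0 <= p ^+ k * (l + (1 - p) * g * k%:R) by lra.
  by rewrite mulr_ge0 ?exprn_ge0 ?(ltW p_gt0) // addr_ge0 ?(ltW l_gt0) // !mulr_ge0 ?(ltW p'_gt0) ?ler0n.
have F0 : F 0%N = 1 by rewrite /F /profile expr0 mul1r mulr0 addr0 subrK.
have F1 : F 1%N = 1 - l by have := F_dec 0%N; rewrite F0 expr0 mulr0 addr0 mul1r; lra.
split=> [k|].
  apply/andP; split; last by rewrite -F0 F_noninc.
  by rewrite /F /profile ltrDl mulr_gt0 ?exprn_gt0 // ltr_wpDr // mulr_ge0 ?ler0n.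
split=> [|k]; first by rewrite F0 F1; lra.
rewrite profile_second_difference // gE -/F.
have : l * p ^+ k.+1 * F k.+1 <= l * p ^+ k.+1 * (1 - l).
  by rewrite ler_wpM2l ?mulr_ge0 ?exprn_ge0 ?(ltW l_gt0) ?(ltW p_gt0) // -F1 F_noninc.
lra.
Qed.

Definition lambda_lower b : R := (1 - 2 * b) ^+ 2 / (b ^+ 2 + (1 - b) ^+ 2).

Lemma lambda_lower_gt0 b : b < 2^-1 -> 0 < lambda_lower b.
Proof.
move=> b_lt_half; rewrite divr_gt0 ?exprn_gt0 ?subr_gt0 //; first lra.
have := sqr_ge0 b; have : 0 < (1 - b) ^+ 2 by rewrite exprn_gt0 // subr_gt0; lra.
lra.
Qed.

Lemma lambda_lower_profile b : 0 < b -> b < 2^-1 -> exists a g,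
  [/\ 0 <= g, 0 < a < 1,
      (1 - p_beta b) * a = lambda_lower b + p_beta b * g
    & (1 - b) * (1 - p_beta b) * g = lambda_lower b * (1 - lambda_lower b)].
Proof.
move=> b_gt0 b_lt_half; set l := lambda_lower b.
pose g := l * (1 - l) / (1 - 2 * b); pose a := (l + p_beta b * g) / (1 - p_beta b).
have b_lt1 : b < 1 by lra.
have b'_gt0 : 0 < 1 - b by lra.
have b''_gt0 : 0 < 1 - 2 * b by lra.
have l_gt0 : 0 < l := lambda_lower_gt0 b_lt_half.
have D_gt0 : 0 < b ^+ 2 + (1 - b) ^+ 2 by rewrite addr_gt0 ?exprn_gt0.
have l_lt1 : l < 1 by rewrite ltr_pdivrMr // mul1r; nra.
have p_gt0 : 0 < p_beta b := p_beta_gt0 b_gt0 b_lt1.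
have p'_gt0 : 0 < 1 - p_beta b by rewrite one_sub_p_beta // divr_gt0.
have g_ge0 : 0 <= g.
  by apply: divr_ge0 (ltW b''_gt0); apply: mulr_ge0 (ltW l_gt0) _; rewrite subr_ge0 ltW.
have aE : (1 - p_beta b) * a = l + p_beta b * g by rewrite mulrC divfK ?gt_eqF.
(* This is where the value of [lambda_lower] enters. *)
have a_gap : (1 - p_beta b - (l + p_beta b * g)) * ((1 - b) * (1 - 2 * b)) = b * l ^+ 2.
  by rewrite /g /l /lambda_lower p_betaE //; field; rewrite !gt_eqF.
have a_gt0 : 0 < a by rewrite divr_gt0 // ltr_wpDr // mulr_ge0 // ltW.
have a_lt1 : a < 1.
  rewrite -(ltr_pM2l p'_gt0) mulr1 aE -subr_gt0.
  by rewrite -(pmulr_lgt0 _ (mulr_gt0 b'_gt0 b''_gt0)) a_gap mulr_gt0 ?exprn_gt0.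
exists a, g; split=> //; first by rewrite a_gt0 a_lt1.
by rewrite one_sub_p_beta // /g; field; rewrite !gt_eqF.
Qed.

End RadialInequality.

Section Tree.
Variables (R : realType) (m : nat).
Hypothesis m_gt0 : (0 < m)%N.
Implicit Types (b l c C : R) (F : nat -> R) (v : vertex m -> R).

Lemma mean_const (a : R) : m%:R^-1 * \sum_(i < m) a = a.
Proof. by rewrite sumr_const card_ord -[a *+ m]mulr_natr mulrC mulfK // pnatr_eq0 -lt0n. Qed.

Lemma mean_ge (a : R) (w : 'I_m -> R) :
  (forall i, a <= w i) -> a <= m%:R^-1 * \sum_(i < m) w i.
Proof.
by move=> w_ge; rewrite -{1}(mean_const a) ler_wpM2l ?invr_ge0 // ler_sum.
Qed.

Definition radial F : vertex m -> R := fun x => F (level x).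

Lemma Delta_radial_nil b F : Delta b (radial F) [::] = F 1%N - F 0%N.
Proof. by rewrite /Delta (eq_bigr (fun=> F 1%N)) // mean_const. Qed.

Lemma Delta_consM b v a s : p_beta b != 0 ->
  Delta b v (a :: s) * p_beta b ^+ (size s).+1 =
  b * v (pred_v (a :: s)) + (1 - b) * (m%:R^-1 * \sum_(i < m) v (succ (a :: s) i))
  - v (a :: s).
Proof. by move=> pb_neq0; rewrite /Delta /level /= mulfVK ?expf_neq0 // -mulrA. Qed.

Lemma radial_super_Delta b l F : 0 < b -> b < 1 -> radial_super b l F ->
  forall x, Delta b (radial F) x + l * radial F x <= 0.
Proof.
move=> b_gt0 b_lt1 [F_root F_step] [|a s]; first by rewrite Delta_radial_nil.
have P_gt0 : 0 < p_beta b ^+ (size s).+1 by rewrite exprn_gt0 ?p_beta_gt0.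
rewrite -(ler_pM2r P_gt0) mul0r mulrDl Delta_consM ?gt_eqF ?p_beta_gt0 //.
rewrite /radial /level /pred_v /= size_takel //.
rewrite (eq_bigr (fun=> F (size s).+2)) => [|i _]; last by rewrite size_rcons.
by rewrite mean_const; have := F_step (size s); lra.
Qed.

Lemma radial_mem_A_beta b l c C F : 0 < b -> b < 1 -> 0 < l -> 0 < c ->
  (forall k, c < F k < C) -> radial_super b l F -> A_beta m b l.
Proof.
move=> b_gt0 b_lt1 l_gt0 c_gt0 F_bound F_super; split=> //.
exists (radial F), c, C; split=> //.
- by have /andP[/lt_trans] := F_bound 0%N; apply.
- by move=> x; apply/andP; exact: F_bound.
- exact: radial_super_Delta.
Qed.

Definition level_inf v (k : nat) : R := inf [set v x | x in [set x | level x = k]].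

Lemma level_inf_le v c x : (forall y, c <= v y) -> level_inf v (level x) <= v x.
Proof. by move=> v_ge; apply: ge_inf; [exists c => _ [y _ <-] | exists x]. Qed.

Lemma level_inf_ge v a k : (forall x, level x = k -> a <= v x) -> a <= level_inf v k.
Proof.
move=> v_ge; apply: lb_le_inf; last by move=> _ [x /v_ge ? <-].
by exists (v (nseq k (Ordinal m_gt0))), (nseq k (Ordinal m_gt0)) => //; exact: size_nseq.
Qed.

Lemma level_inf_geM v t L k : 0 < L -> (forall x, 0 < v x) ->
  (forall x, level x = k -> L <= t * v x) -> L <= t * level_inf v k.
Proof.
move=> L_gt0 v_gt0 v_ge.
have t_gt0 : 0 < t.
  have /v_ge := size_nseq k (Ordinal m_gt0); rewrite ltNge; apply: contraTN => t_le0.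
  by rewrite -ltNge (le_lt_trans (mulr_le0_ge0 t_le0 (ltW (v_gt0 _)))).
rewrite mulrC -ler_pdivrMr //; apply: level_inf_ge => x /v_ge.
by rewrite ler_pdivrMr // mulrC.
Qed.

Lemma radial_super_level_inf b l c v : 0 < b -> b < 1 -> 0 < c ->
  (forall x, c <= v x) -> (forall x, Delta b v x + l * v x <= 0) ->
  radial_super b l (level_inf v).
Proof.
move=> b_gt0 b_lt1 c_gt0 v_ge v_super; set F := level_inf v.
have F_le x : F (level x) <= v x by exact: level_inf_le v_ge.
have F_ge k : c <= F k by apply: level_inf_ge => x _; exact: v_ge.
have mean_succ_ge x : F (level x).+1 <= m%:R^-1 * \sum_(i < m) v (succ x i).
  by apply: mean_ge => i; have := F_le (succ x i); rewrite /level size_rcons.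
split=> [|k].
  have F_nil : F 0%N = v [::] by apply/le_anti; rewrite (F_le [::]) level_inf_ge // => x /size0nil ->.
  by have := v_super [::]; have := mean_succ_ge [::]; rewrite F_nil /Delta; lra.
have P_gt0 : 0 < p_beta b ^+ k.+1 by rewrite exprn_gt0 ?p_beta_gt0.
suff : b * F k + (1 - b) * F k.+2 <= (1 - l * p_beta b ^+ k.+1) * F k.+1 by lra.
apply: level_inf_geM => [||[//|a s] [s_k]]; last subst k.
- by rewrite addr_gt0 // mulr_gt0 ?subr_gt0 // (lt_le_trans c_gt0).
- by move=> x; exact: lt_le_trans c_gt0 (v_ge x).
have := v_super (a :: s); rewrite -(ler_pM2r P_gt0) mul0r mulrDl Delta_consM ?gt_eqF ?p_beta_gt0 //.
have := mean_succ_ge (a :: s); have := F_le (pred_v (a :: s)).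
rewrite /level /pred_v /= size_takel // => /(ler_wpM2l (ltW b_gt0)) pred_ge.
have b'_ge0 : 0 <= 1 - b by lra.
by move=> /(ler_wpM2l b'_ge0); lra.
Qed.

Lemma A_beta_radial b l : 0 < b -> b < 1 -> A_beta m b l ->
  exists F c C, [/\ 0 < c, forall k, c <= F k < C & radial_super b l F].
Proof.
move=> b_gt0 b_lt1 [_ [v [c [C [c_gt0 _ v_bound v_super]]]]].
have v_ge x : c <= v x by exact: ltW (v_bound x).1.
exists (level_inf v), c, C; split=> [//|k|]; last exact: radial_super_level_inf v_ge v_super.
rewrite level_inf_ge //=; have x_k : level (nseq k (Ordinal m_gt0)) = k := size_nseq _ _.
by rewrite -{1}x_k (le_lt_trans (level_inf_le _ v_ge)) ?(v_bound _).2.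
Qed.

Lemma A_beta_le b l : 0 < b -> b < 2^-1 -> A_beta m b l -> l <= (1 - 2 * b) / (1 - b).
Proof.
move=> b_gt0 b_lt_half lA; have b_lt1 : b < 1 by lra.
have [F [c [C [c_gt0 F_bound F_super]]]] := A_beta_radial b_gt0 b_lt1 lA.
have F_gt0 k : 0 < F k by have /andP[/(lt_le_trans c_gt0)] := F_bound k.
have F_ge0 k : 0 <= F k := ltW (F_gt0 k).
rewrite -one_sub_p_beta //; apply: (decrement_bound _ _ (F_gt0 0%N) F_ge0).
- exact: ltW (p_beta_gt0 b_gt0 b_lt1).
- by rewrite -subr_gt0 one_sub_p_beta // divr_gt0 ?subr_gt0 //; lra.
- exact: radial_super_decrement (ltW lA.1) F_ge0 F_super.
Qed.

Lemma A_beta_mono b1 b2 : 0 < b1 -> b1 <= b2 -> b2 < 1 -> A_beta m b2 `<=` A_beta m b1.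
Proof.
move=> b1_gt0 b12 b2_lt1 l lA; have b2_gt0 := lt_le_trans b1_gt0 b12.
have [F [c [C [c_gt0 F_bound F_super]]]] := A_beta_radial b2_gt0 b2_lt1 lA.
have F_bound' k : c / 2 < F k < C.
  by have /andP[? ?] := F_bound k; apply/andP; split=> //; lra.
apply: (radial_mem_A_beta (c := c / 2)) F_bound' _ => //; first by lra.
- exact: lA.1.
- by rewrite divr_gt0.
- apply: radial_super_mono b1_gt0 b12 b2_lt1 (ltW lA.1) _ F_super => k.
  by have /andP[/(le_trans (ltW c_gt0))] := F_bound k.
Qed.

Lemma lambda_lower_mem b : 0 < b -> b < 2^-1 -> A_beta m b (lambda_lower b).
Proof.
move=> b_gt0 b_lt_half.
have [a [g [g_ge0 a_bound aE gE]]] := lambda_lower_profile b_gt0 b_lt_half.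
have b_lt1 : b < 1 by lra.
have l_gt0 := lambda_lower_gt0 b_lt_half.
have [F_bound F_super] := radial_super_profile b_gt0 b_lt1 l_gt0 g_ge0 a_bound aE gE.
have /andP[a_gt0 a_lt1] := a_bound.
apply: (radial_mem_A_beta (c := 1 - a) (C := 2)) F_super => //.
- by rewrite subr_gt0.
- by move=> k; have /andP[-> /le_lt_trans ->] := F_bound k; rewrite ?ltr1n.
Qed.

End Tree.

Theorem proposition1p3 (R : realType) (m : nat) (hm : (2 <= m)%N) :
  (forall b1 b2 : R, 0 < b1 -> b1 <= b2 -> b2 < 2^-1 ->
     (lambda1 m b2 <= lambda1 m b1)%E) /\
  (forall beta : R, 0 < beta -> beta < 2^-1 ->
     (((1 - 2 * beta) ^+ 2 / (beta ^+ 2 + (1 - beta) ^+ 2))%:E <= lambda1 m beta)%E /\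
     (lambda1 m beta <= ((1 - 2 * beta) / (1 - beta))%:E)%E).
Proof.
have m_gt0 : (0 < m)%N by apply: leq_trans hm.
split=> [b1 b2 b1_gt0 b12 b2_lt_half | b b_gt0 b_lt_half].
  apply: ereal_sup_le => _ [l lA <-]; exists l => //.
  by apply: (A_beta_mono m_gt0 b1_gt0 b12) lA; lra.
split.
  by apply: ereal_sup_ubound; exists (lambda_lower b) => //; exact: lambda_lower_mem.
by apply: ge_ereal_sup => _ [l lA <-]; rewrite lee_fin; exact: A_beta_le lA.
Qed.
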